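(* Let $n\geq 2$. (1) For any $\tau\in S_{n-1}$ and any $I\sqcup J=[2,n]$, there exists $\sigma\in S_n$ such that $A^\sigma_{[2,n],\emptyset}=A^\tau_{I,J}$. (2) For any $\sigma\in S_{n-1}$, the only triple $(\tau,I,J)$ with $\tau\in S_{n-1}$, $I\sqcup J=[2,n]$ and $A^\tau_{I,J}=A^\sigma_{[2,n],\emptyset}$ is $\tau=\sigma$, $I=[2,n]$, $J=\emptyset$. (3) For any $\sigma\in S_{n-1}(1,i)$ with $2\leq i\leq n$, the complete list of triples $(\tau,I,J)$ with $\tau\in S_{n-1}$, $I\sqcup J=[2,n]$ and $A^\tau_{I,J}=A^\sigma_{[2,n],\emptyset}$ is indexed by the sequences $2\leq m_1<\dots<m_{i-1}\leq n$, and is given by $$\tau=\sigma C_{m_{i-1}}^{-1}\cdots C_{m_1}^{-1},\quad I=[2,n]\setminus\{m_1,\dots,m_{i-1}\},\quad J=\{m_1,\dots,m_{i-1}\}.$$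
   Context: Let $w_{ij}$, $1\leq i,j\leq n$, be formal variables subject only to $w_{ij}+w_{ji}=0$ (so they span a free abelian group with basis $w_{ij}$, $i<j$). Let $[2,n]=\{2,\dots,n\}$. For $\sigma\in S_n$ and a disjoint decomposition $I\sqcup J=[2,n]$, set $$A^\sigma_{I,J}:=\sum_{i\in I}\sum_{\ell=1}^{i-1}w_{\sigma(\ell)\sigma(i)}-\sum_{j\in J}\sum_{\ell=1}^{j-1}w_{\sigma(\ell)\sigma(j)}.$$ Permutations are composed right-to-left: $(\sigma\tau)(k)=\sigma(\tau(k))$. $S_{n-1}\subset S_n$ is the subgroup of $\tau$ with $\tau(1)=1$, $S_{n-1}(1,i)=\{\tau\cdot(1,i):\tau\in S_{n-1}\}$, and for $m\geq 2$, $C_m$ is the cycle $(1,m,m-1,\dots,2)$. *)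

(* Indices are 0-based: paper index k in [1,n] is the ordinal
   k-1 : 'I_n.  In particular [2,n] is the set of ordinals with value >= 1,
   S_{n-1} is the stabilizer of the ordinal 0, etc. *)
From HB Require Import structures.
From mathcomp Require Import all_boot all_order all_fingroup all_algebra.
From mathcomp Require Import zify.
Set Implicit Arguments.
Unset Strict Implicit.
Unset Printing Implicit Defensive.
Import GRing.Theory.
Local Open Scope ring_scope.

Section Defs.
Variable n : nat.

(* The free abelian group on w_ab (a<b): integer coefficient vectors indexed
   by pairs; only entries (a,b) with a<b are ever nonzero. *)
Definition wgrp := {ffun 'I_n * 'I_n -> int}.

(* w a b, with w a b + w b a = 0 (and hence w a a = 0). *)
Definition w (a b : 'I_n) : wgrp :=
  [ffun p : 'I_n * 'I_n =>
     if (p.1 == a) && (p.2 == b) && (a < b)%N then 1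
     else if (p.1 == b) && (p.2 == a) && (b < a)%N then -1 else 0].

(* A^sigma_{I,J}; the paper's l in [1, i-1] is the ordinal l < i. *)
Definition A (s : 'S_n) (I J : {set 'I_n}) : wgrp :=
  \sum_(i in I) \sum_(l : 'I_n | (l < i)%N) w (s l) (s i)
  - \sum_(j in J) \sum_(l : 'I_n | (l < j)%N) w (s l) (s j).

Definition I2n : {set 'I_n} := [set k : 'I_n | (0 < k)%N].

Definition is_split (I J : {set 'I_n}) : Prop :=
  I :&: J = set0 /\ I :|: J = I2n.

Definition inS1 (s : 'S_n) : Prop :=
  forall k : 'I_n, nat_of_ord k = 0%N -> nat_of_ord (s k) = 0%N.

(* paper's composition (sigma tau)(k) = sigma (tau k); mathcomp's perm product
   is left-to-right, so this is (t * s)%g *)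
Definition permc (s t : 'S_n) : 'S_n := (t * s)%g.

(* The cycle C_m = (1, m, m-1, ..., 2), for the ordinal m (paper's m is m+1):
   0 |-> m, k |-> k-1 for 1 <= k <= m, other k fixed. *)
Definition cycf (m k : 'I_n) : 'I_n :=
  if nat_of_ord k == 0%N then m
  else if (nat_of_ord k <= nat_of_ord m)%N
       then Ordinal (leq_ltn_trans (leq_pred k) (ltn_ord k))
       else k.

Lemma cycf_inj (m : 'I_n) : injective (cycf m).
Proof.
move=> x y; rewrite /cycf => H; apply: val_inj.
have := congr1 val H.
case: eqP => Hx; case: eqP => Hy => //=;
  repeat case: ifP => //= ; lia.
Qed.

Definition C (m : 'I_n) : 'S_n := perm (@cycf_inj m).

(* For l = [:: m_1; ...; m_k], Cinvs l = C_{m_k}^{-1} ... C_{m_1}^{-1}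
   (paper's composition order). *)
Definition Cinvs (l : seq 'I_n) : 'S_n :=
  foldr (fun m acc => permc acc (C m)^-1%g) 1%g l.

End Defs.

From HB Require Import structures.
From mathcomp Require Import all_boot all_order all_fingroup all_algebra.
From mathcomp Require Import zify.
Set Implicit Arguments.
Unset Strict Implicit.
Unset Printing Implicit Defensive.
Import GRing.Theory Num.Theory Order.TTheory.
Local Open Scope ring_scope.

(* Write kappa_J (signed_ord J below) for k |-> -k on J and k |-> k elsewhere.
   For a < b the coefficient of w_ab in A^tau_{I,J} is the sign of
   kappa_J(tau^-1 b) - kappa_J(tau^-1 a), so A^tau_{I,J} = A^sigma_{[2,n],0}
   exactly when kappa_J o tau^-1 lists its values in the relative order given
   by sigma^-1, i.e. when sigma^-1 = rank(kappa_J) o tau^-1.  This gives (1).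
   If tau fixes 1, evaluating at 1 shows that |J| = sigma^-1(1) - 1, as the
   values below kappa_J(1) = 1 are those on J.  Finally, for
   J = {m_1 < ... < m_k} the ranking permutation of kappa_J is
   C_{m_k}^-1 ... C_{m_1}^-1 (induction on k), which yields (2) (k = 0) and
   (3) (k = i - 1). *)

Section Rank.
Variable T : finType.
Implicit Types (x y : T).

Definition rank (R : realDomainType) (f : T -> R) x : nat := #|[set y | f y < f x]|.

Lemma eq_rank (R R' : realDomainType) (f : T -> R) (g : T -> R') :
  (forall x y, (f x < f y) = (g x < g y)) -> rank f =1 rank g.
Proof. by move=> fg x; apply: eq_card => y; rewrite !inE fg. Qed.

Lemma rank_perm (R : realDomainType) (f : T -> R) (p : {perm T}) x :
  rank (fun y => f (p y)) x = rank f (p x).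
Proof.
rewrite /rank -[RHS](@card_preimset _ p _ (@perm_inj _ p)).
by apply: eq_card => y; rewrite !inE.
Qed.

Lemma rank_lt_card (R : realDomainType) (f : T -> R) x : (rank f x < #|T|)%N.
Proof.
rewrite -cardsT; apply/proper_card/properP; split; first exact: subsetT.
by exists x; rewrite !inE ?ltxx.
Qed.

Lemma lt_rank (R : realDomainType) (f : T -> R) :
  injective f -> forall x y, (rank f x < rank f y)%N = (f x < f y).
Proof.
move=> f_inj x y; case: (ltrP (f x) (f y)) => fxy.
  apply/proper_card/properP; split.
    by apply/subsetP => z; rewrite !inE => /lt_trans; apply.
  by exists x; rewrite !inE ?fxy ?ltxx.
apply/negbTE; rewrite -leqNgt; apply: subset_leq_card; apply/subsetP => z.
by rewrite !inE => /lt_le_trans; apply.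
Qed.

Lemma rank_inj (R : realDomainType) (f : T -> R) : injective f -> injective (rank f).
Proof.
move=> f_inj x y rxy; apply: (f_inj).
by have := lt_rank f_inj x y; have := lt_rank f_inj y x; rewrite rxy ltnn; case: ltgtP.
Qed.

End Rank.

Lemma rank_ord n (x : 'I_n) : rank (fun y : 'I_n => (y : nat)%:Z) x = x.
Proof.
rewrite /rank; have ->: [set y : 'I_n | (y : nat)%:Z < (x : nat)%:Z]
                        = widen_ord (ltnW (ltn_ord x)) @: 'I_x.
  apply/setP => y; rewrite !inE ltz_nat; apply/idP/imsetP => [yx | [z _ -> /=]].
    by exists (Ordinal yx) => //; apply: val_inj.
  exact: ltn_ord.
by rewrite card_imset ?card_ord // => y z [] /val_inj.
Qed.

Section SignPattern.
Variable n : nat.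
Implicit Types (f g : 'I_n -> int) (I J : {set 'I_n}) (a b k : 'I_n).

Definition sign_pattern f : wgrp n :=
  [ffun q : 'I_n * 'I_n =>
     if (q.1 < q.2)%N then (if f q.1 < f q.2 then 1 else -1) else 0].

Lemma sign_pattern_eqP f g : injective f -> injective g ->
  sign_pattern f = sign_pattern g <-> rank f =1 rank g.
Proof.
move=> f_inj g_inj; split => [fg | fg]; last first.
  by apply/ffunP => -[a b]; rewrite !ffunE /= -!(lt_rank f_inj) -!(lt_rank g_inj) !fg.
have lt_fg a b : (a < b)%N -> (f a < f b) = (g a < g b).
  move=> ab; move/ffunP: fg => /(_ (a, b)); rewrite !ffunE /= ab.
  by do 2 case: ifP.
apply: eq_rank => a b; case: (ltngtP a b) => [ab | ba | /val_inj ->]; last by rewrite !ltxx.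
  exact: lt_fg.
by rewrite !ltNge !le_eqVlt -lt_fg // (inj_eq f_inj) (inj_eq g_inj).
Qed.

Definition signed_ord J k : int := if k \in J then - (k : nat)%:Z else (k : nat)%:Z.

Lemma signed_ord_inj J : injective (signed_ord J).
Proof.
by move=> a b; rewrite /signed_ord => ab; apply: ord_inj; move: ab; do 2 case: ifP; lia.
Qed.

Lemma rank_signed_ord0 k : rank (signed_ord set0) k = k.
Proof. by rewrite -[RHS]rank_ord; apply: eq_rank => a b; rewrite /signed_ord !inE. Qed.

Lemma rank_signed_ord_first J (z : 'I_n) : (z : nat) = 0%N -> J \subset I2n n ->
  rank (signed_ord J) z = #|J|.
Proof.
move=> z0 /subsetP J_pos; apply: eq_card => k; rewrite !inE /signed_ord.
have /negPf -> : z \notin J by apply/negP => /J_pos; rewrite inE z0.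
by case: (boolP (k \in J)) => [/J_pos | _]; rewrite ?inE z0; lia.
Qed.

Lemma wE x y a b : w x y (a, b) =
  if (a < b)%N then ((x == a) && (y == b))%:R - ((x == b) && (y == a))%:R else 0.
Proof.
rewrite /w ffunE /= -!val_eqE /=.
by repeat (case: eqP => /= ?); rewrite ?ltnn; repeat (case: ltnP => /= ?); lia.
Qed.

Lemma sum2_pred1 (F : 'I_n -> 'I_n -> int) a b :
  \sum_i \sum_l F l i * ((l == a) && (i == b))%:R = F a b.
Proof.
rewrite (bigD1 b) //= [X in _ + X]big1 => [|i /negPf ib]; last first.
  by apply: big1 => l _; rewrite ib andbF mulr0.
rewrite addr0 (bigD1 a) //= [X in _ + X]big1 => [|l /negPf la]; last by rewrite la mulr0.
by rewrite !eqxx mulr1 addr0.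
Qed.

Lemma sum_w_perm (G : 'I_n -> 'I_n -> int) (p : 'S_n) a b : (a < b)%N ->
  \sum_i \sum_l G l i * w (p l) (p i) (a, b)
  = G (p^-1 a)%g (p^-1 b)%g - G (p^-1 b)%g (p^-1 a)%g.
Proof.
move=> ab; rewrite -!sum2_pred1 -sumrB; apply: eq_bigr => i _; rewrite -sumrB.
by apply: eq_bigr => l _; rewrite wE ab mulrBr !(canF_eq (permK p)).
Qed.

Lemma sumrB_mem (X : 'I_n -> int) I J :
  \sum_(i in I) X i - \sum_(i in J) X i = \sum_i ((i \in I)%:R - (i \in J)%:R) * X i.
Proof.
rewrite (big_mkcond (mem I)) (big_mkcond (mem J)) -sumrB; apply: eq_bigr => i _.
by rewrite mulrBl !mulr_natl !mulrb.
Qed.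

Lemma split_weight_sign I J a b : is_split I J -> a != b ->
  ((b \in I)%:R - (b \in J)%:R) * (a < b)%N%:R
  - ((a \in I)%:R - (a \in J)%:R) * (b < a)%N%:R
  = if signed_ord J a < signed_ord J b then 1 else -1 :> int.
Proof.
case=> IJ0 IJ; rewrite -val_eqE /signed_ord.
have cover k : ((k \in I) || (k \in J)) = (0 < k)%N by rewrite -in_setU IJ inE.
have disj k : ~~ ((k \in I) && (k \in J)) by rewrite -in_setI IJ0 inE.
move: (cover a) (cover b) (disj a) (disj b).
case: (a \in I); case: (a \in J); case: (b \in I); case: (b \in J)
  => //= /esym ha /esym hb _ _ /eqP ab;
  by case: ltnP => ?; case: ltnP => ?; case: ltrP => ?; lia.
Qed.

Lemma is_splitE I J : is_split I J <-> J \subset I2n n /\ I = I2n n :\: J.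
Proof.
split => [[IJ0 IJ] | [/subsetP J_pos ->]].
  split; first by rewrite -IJ subsetUr.
  apply/setP => k; move/setP/(_ k): IJ0; rewrite -IJ !inE.
  by case: (k \in I); case: (k \in J).
split; apply/setP => k; rewrite !inE.
  by case: (boolP (k \in J)) => [/J_pos|]; rewrite ?inE ?andbF.
by case: (boolP (k \in J)) => [/J_pos|]; rewrite ?inE ?orbT ?orbF.
Qed.

Lemma A_sign_pattern (tau : 'S_n) I J : is_split I J ->
  A tau I J = sign_pattern (fun k => signed_ord J (tau^-1 k)%g).
Proof.
move=> IJ; apply/ffunP => -[a b]; rewrite /A !ffunE /= !sum_ffunE.
under eq_bigr do rewrite sum_ffunE.
under [X in _ - X]eq_bigr do rewrite sum_ffunE.
rewrite sumrB_mem; case: ltnP => ab; last first.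
  by apply: big1 => i _; rewrite big1 ?mulr0 // => l _; rewrite wE ltnNge ab.
pose G (l i : 'I_n) := ((i \in I)%:R - (i \in J)%:R) * (l < i)%N%:R : int.
transitivity (\sum_i \sum_l G l i * w (tau l) (tau i) (a, b)).
  apply: eq_bigr => i _; rewrite big_mkcond mulr_sumr; apply: eq_bigr => l _.
  by rewrite /G -mulrA; case: ifP => _; rewrite ?mulr1n ?mulr0n ?mul1r ?mul0r ?mulr0.
rewrite (sum_w_perm G tau ab) /G split_weight_sign //.
by apply: contraTneq ab => /perm_inj ->; rewrite ltnn.
Qed.

Lemma A_eq_A_fullP (tau sigma : 'S_n) I J : is_split I J ->
  A tau I J = A sigma (I2n n) set0 <->
  forall k, rank (signed_ord J) (tau^-1 k)%g = (sigma^-1 k)%g.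
Proof.
move=> IJ; have full : is_split (I2n n) set0 by apply/is_splitE; rewrite sub0set setD0.
rewrite (A_sign_pattern _ IJ) (A_sign_pattern _ full).
apply: iff_trans (sign_pattern_eqP _ _) _; try by move=> x y /signed_ord_inj /perm_inj.
by split=> fg k; [move: (fg k) | ]; rewrite !rank_perm rank_signed_ord0 // fg.
Qed.

Lemma exists_rank_perm f :
  injective f -> exists p : 'S_n, forall k, p k = rank f k :> nat.
Proof.
move=> f_inj; have lt_n k : (rank f k < n)%N by have := rank_lt_card f k; rewrite card_ord.
have inj : injective (fun k => Ordinal (lt_n k)) by move=> x y [] /(rank_inj f_inj).
by exists (perm inj) => k; rewrite permE.
Qed.

Lemma A_full_exists (tau : 'S_n) I J : is_split I J ->
  exists sigma : 'S_n, A sigma (I2n n) set0 = A tau I J.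
Proof.
move=> IJ; have [p pE] : exists p : 'S_n,
    forall k, p k = rank (fun k => signed_ord J (tau^-1 k)%g) k :> nat.
  by apply: exists_rank_perm => x y /signed_ord_inj /perm_inj.
by exists p^-1%g; apply/esym/(A_eq_A_fullP _ _ IJ) => k; rewrite invgK pE rank_perm.
Qed.

End SignPattern.

Section Cycles.
Variable n : nat.

Section CycleStep.
Variables (m : 'I_n) (J : {set 'I_n}).
Hypotheses (m_pos : (0 < m)%N) (J_gt : forall x, x \in J -> (m < x)%N).

Lemma signed_ord_CE x : signed_ord (m |: J) (C m x) =
  if (x : nat) == 0%N then - (m : nat)%:Z
  else if (x <= m)%N then (x : nat)%:Z - 1 else signed_ord J x.
Proof.
rewrite /C permE /cycf; case: ifP => [_ | /negbT x0]; first by rewrite /signed_ord setU11.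
rewrite /signed_ord in_setU1; case: leqP => xm.
  set y := Ordinal _.
  have ym : (y == m) = false by apply/negbTE/eqP => /(congr1 (@nat_of_ord n)) /=; lia.
  have yJ : (y \in J) = false by apply/negbTE/negP => /J_gt /=; lia.
  by rewrite ym yJ /=; lia.
by have -> : (x == m) = false by apply/negbTE/eqP => /(congr1 (@nat_of_ord n)) /=; lia.
Qed.

(* Up to the values it takes, signed_ord (m |: J) \o C m is signed_ord J followed
   by the increasing relabelling 0 |-> -m, v |-> v - 1 on [1, m], v |-> v for
   |v| > m. *)
Lemma lt_signed_ord_C u v :
  (signed_ord (m |: J) (C m u) < signed_ord (m |: J) (C m v))
  = (signed_ord J u < signed_ord J v).
Proof.
have small (x : 'I_n) : (x <= m)%N -> signed_ord J x = (x : nat)%:Z.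
  by move=> xm; rewrite /signed_ord; case: ifP => // /J_gt; lia.
have large (x : 'I_n) : (m < x)%N ->
    ((m : nat)%:Z < signed_ord J x) || (signed_ord J x < - (m : nat)%:Z).
  by move=> mx; rewrite /signed_ord; case: ifP; lia.
rewrite !signed_ord_CE; move: (small u) (large u) (small v) (large v).
by do 2 case: eqP => ?; do 2 case: leqP => ?; lia.
Qed.

End CycleStep.

Lemma Cinvs_rank (l : seq 'I_n) :
  sorted ltn (map val l) -> all (fun m : 'I_n => (1 <= m)%N) l ->
  forall k, Cinvs l k = rank (signed_ord [set m in l]) k :> nat.
Proof.
elim: l => [_ _ k | m l IHl] /=; first by rewrite perm1 set_nil rank_signed_ord0.
rewrite (path_sortedE ltn_trans) => /andP[/allP m_lt l_sorted] /andP[m_pos l_pos] k.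
have J_gt x : x \in [set y in l] -> (m < x)%N by rewrite inE => /(map_f val) /m_lt.
rewrite /permc permM IHl // set_cons -{2}(permKV (C m) k) -(rank_perm _ (C m)).
by apply: eq_rank => u v; rewrite lt_signed_ord_C.
Qed.

Lemma exists_sorted_enum (J : {set 'I_n}) :
  exists l : seq 'I_n, [/\ sorted ltn (map val l), size l = #|J| & [set m in l] = J].
Proof.
exists (sort (fun x y : 'I_n => (x <= y)%N) (enum J)); split.
- rewrite ltn_sorted_uniq_leq (map_inj_uniq val_inj) sort_uniq enum_uniq sorted_map.
  by apply: sort_sorted => x y; exact: leq_total.
- by rewrite size_sort cardE.
- by apply/setP => x; rewrite inE mem_sort mem_enum.
Qed.

Lemma Cinvs_first (l : seq 'I_n) (z : 'I_n) :
  sorted ltn (map val l) -> all (fun m : 'I_n => (1 <= m)%N) l -> (z : nat) = 0%N ->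
  Cinvs l z = size l :> nat.
Proof.
move=> l_sorted l_pos z0; rewrite Cinvs_rank // rank_signed_ord_first //.
  by rewrite cardsE (card_uniqP _) // -(map_inj_uniq val_inj) (sorted_uniq ltn_trans ltnn).
by apply/subsetP => x; rewrite !inE => /(allP l_pos).
Qed.

Lemma inS1_invE (s : 'S_n) (z : 'I_n) :
  inS1 s -> (z : nat) = 0%N -> (s^-1 z)%g = z.
Proof.
by move=> s1 z0; rewrite -{1}(_ : s z = z) ?permK //; apply: val_inj; rewrite /= s1.
Qed.

Lemma A_full_fiber (sigma tau : 'S_n) (I J : {set 'I_n}) (z : 'I_n) :
  (z : nat) = 0%N ->
  (inS1 tau /\ is_split I J /\ A tau I J = A sigma (I2n n) set0) <->
  (exists l : seq 'I_n,
     size l = (sigma^-1 z)%g /\ all (fun m : 'I_n => (1 <= m)%N) l /\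
     sorted ltn (map (@nat_of_ord n) l) /\ tau = permc sigma (Cinvs l) /\
     I = I2n n :\: [set m in l] /\ J = [set m in l]).
Proof.
move=> z0; split=> [[tau1 [IJ /(A_eq_A_fullP _ _ IJ) tauE]] |].
  have /is_splitE[J_pos ->] := IJ.
  have [l [l_sorted l_size lJ]] := exists_sorted_enum J.
  have l_pos : all (fun m : 'I_n => (1 <= m)%N) l.
    by apply/allP => x xl; move/subsetP/(_ x): J_pos; rewrite -lJ !inE; apply.
  have sizeE : size l = (sigma^-1 z)%g.
    by rewrite l_size -(rank_signed_ord_first z0 J_pos) -tauE inS1_invE.
  have tauE' : tau = permc sigma (Cinvs l).
    apply/permP => x; rewrite /permc permM.
    have -> : Cinvs l x = (sigma^-1 (tau x))%g.
      by apply: val_inj; rewrite /= Cinvs_rank // lJ -tauE permK.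
    by rewrite permKV.
  by exists l; rewrite lJ.
case=> l [l_size [l_pos [l_sorted [-> [-> ->]]]]].
have J_pos : [set m in l] \subset I2n n.
  by apply/subsetP => x; rewrite !inE => /(allP l_pos).
have IJ : is_split (I2n n :\: [set m in l]) [set m in l] by apply/is_splitE.
split; [|split] => //.
  move=> k k0; rewrite /permc permM.
  have -> : Cinvs l k = (sigma^-1 z)%g by apply: val_inj; rewrite /= Cinvs_first.
  by rewrite permKV z0.
by apply/(A_eq_A_fullP _ _ IJ) => x; rewrite /permc invMg permM -Cinvs_rank // permKV.
Qed.

End Cycles.

Theorem lemma3p4 (n : nat) (Hn : (2 <= n)%N) :
  (* (1) *)
  (forall (tau : 'S_n) (I J : {set 'I_n}),
      inS1 tau -> is_split I J ->
      exists sigma : 'S_n, A sigma (I2n n) set0 = A tau I J)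
  /\
  (* (2) *)
  (forall sigma : 'S_n, inS1 sigma ->
     forall (tau : 'S_n) (I J : {set 'I_n}),
       (inS1 tau /\ is_split I J /\ A tau I J = A sigma (I2n n) set0) <->
       (tau = sigma /\ I = I2n n /\ J = set0))
  /\
  (* (3) *)
  (forall (i : 'I_n) (rho : 'S_n), (1 <= i)%N -> inS1 rho ->
     let sigma := permc rho (tperm (Ordinal (leq_ltn_trans (leq0n i) (ltn_ord i))) i) in
     forall (tau : 'S_n) (I J : {set 'I_n}),
       (inS1 tau /\ is_split I J /\ A tau I J = A sigma (I2n n) set0) <->
       (exists l : seq 'I_n,
          size l = nat_of_ord i /\
          all (fun m : 'I_n => (1 <= m)%N) l /\
          sorted ltn (map (@nat_of_ord n) l) /\
          tau = permc sigma (Cinvs l) /\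
          I = I2n n :\: [set m in l] /\
          J = [set m in l])).
Proof.
pose z : 'I_n := Ordinal (ltnW Hn).
split; [|split].
-
  by move=> tau I J _ /A_full_exists.
- move=> sigma sigma1 tau I J; apply: iff_trans (A_full_fiber _ _ _ _ (z := z) erefl) _.
  rewrite inS1_invE //; split=> [[l [l_size [_ [_ [-> [-> ->]]]]]] | [-> [-> ->]]].
    have -> : l = [::] by apply/size0nil; rewrite l_size.
    by rewrite /permc mul1g set_nil setD0.
  by exists [::]; rewrite /permc /= mul1g set_nil setD0.
move=> i rho _ rho1 sigma tau I J.
apply: iff_trans (A_full_fiber _ _ _ _ (z := z) erefl) _.
suff -> : (sigma^-1 z)%g = i by [].
by apply: (canLR (permK sigma)); apply: val_inj; rewrite /sigma /permc permM tpermR /= rho1.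
Qed.
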